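(* Let $\mathcal{T}$ be an $l$-eligible microdata table and let $\dot{R}$ be the set of removed tuples at the end of Phase One (as described in the context). Then $OPT \ge l\cdot h(\dot{R})$.
   Context: A microdata table $\mathcal{T}$ is a multiset of $n$ tuples, each with values on $d$ quasi-identifier (QI) attributes and one sensitive attribute (SA). For a multiset $Q$ of tuples and SA value $v$, $h(Q,v)$ is the number of tuples of $Q$ with SA value $v$, $h(Q)=\max_v h(Q,v)$, and the pillars of $Q$ are the SA values $v$ with $h(Q,v)=h(Q)$. $Q$ is $l$-eligible if $|Q|\ge l\cdot h(Q)$. Partition $\mathcal{T}$ into $Q_1,\dots,Q_s$, the maximal classes of tuples having identical values on all QI attributes. Reformulated tuple minimization: choose sub-multisets $Q'_i\subseteq Q_i$ and let $R'=\mathcal{T}\setminus\bigcup_i Q'_i$, such that every $Q'_i$ and $R'$ are $l$-eligible, minimizing $|R'|$; $OPT$ denotes the minimum value. Phase One: start with $R=\emptyset$; for each $i$, while $Q_i$ is not $l$-eligible, move one tuple whose SA value is a pillar of $Q_i$ from $Q_i$ to $R$ (ties arbitrary). $\dot{R}$ denotes the resulting $R$. *)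

From mathcomp Require Import all_boot.
Set Implicit Arguments. Unset Strict Implicit. Unset Printing Implicit Defensive.

Section Microdata.
(* qT : type of QI-value vectors (values on all d QI attributes);
   sT : type of SA values. A tuple is a pair (QI vector, SA value).
   Multisets of tuples are sequences (order irrelevant). *)
Variables (qT sT : eqType).
Notation tup := (qT * sT)%type.

Definition hv (Q : seq tup) (v : sT) : nat := count (fun t => t.2 == v) Q.

Definition h (Q : seq tup) : nat := \max_(t <- Q) hv Q t.2.

Definition eligible (l : nat) (Q : seq tup) : bool := l * h Q <= size Q.

Definition qi_class (T : seq tup) (q : qT) : seq tup := [seq t <- T | t.1 == q].

Definition qi_values (T : seq tup) : seq qT := undup (map fst T).

(* Phase One on a single class: phase1 l Q R means that starting from Q,
   repeatedly moving one tuple whose SA value is a pillar of the current Q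
   while Q is not l-eligible (arbitrary tie-breaking), the moved tuples are R. *)
Inductive phase1 (l : nat) : seq tup -> seq tup -> Prop :=
| phase1_done Q : eligible l Q -> phase1 l Q [::]
| phase1_step Q t R : ~~ eligible l Q -> t \in Q -> hv Q t.2 = h Q ->
    phase1 l (rem t Q) R -> phase1 l Q (t :: R).

Inductive phase1_classes (l : nat) (T : seq tup) : seq qT -> seq tup -> Prop :=
| phase1c_nil : phase1_classes l T [::] [::]
| phase1c_cons q qs R Rs : phase1 l (qi_class T q) R ->
    phase1_classes l T qs Rs -> phase1_classes l T (q :: qs) (R ++ Rs).

Definition phase_one (l : nat) (T Rdot : seq tup) : Prop :=
  phase1_classes l T (qi_values T) Rdot.

(* A feasible solution of reformulated tuple minimization:
   S is the (multiset) union of the kept sub-multisets Q'_i (Q'_i is the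
   QI-class of S for the i-th QI value), R' = T \ S. *)
Definition feasible (l : nat) (T S R' : seq tup) : Prop :=
  perm_eq T (S ++ R') /\ (forall q : qT, eligible l (qi_class S q)) /\ eligible l R'.

End Microdata.

From mathcomp Require Import all_boot zify.

Set Implicit Arguments.
Unset Strict Implicit.
Unset Printing Implicit Defensive.

(* Within one QI class Q, any l-eligible Q' whose SA histogram is dominated by
   that of Q keeps strictly fewer copies of every pillar of a non-eligible Q
   than Q has; so each tuple Phase One removes is "paid for", and the removed
   tuples R satisfy h(R, v) + h(Q', v) <= h(Q, v) for every SA value v.
   Summing over the classes gives h(Rdot, v) + h(S, v) <= h(T, v)
   = h(S, v) + h(R', v), hence h(Rdot) <= h(R'), and l h(R') <= |R'| is the
   eligibility of R'. *)

Section PhaseOne.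
Variables (qT sT : eqType).
Notation tup := (qT * sT)%type.
Implicit Types (Q R S T X : seq tup) (v : sT) (qs : seq qT).

Definition hv_le (Q' Q : seq tup) : Prop := forall v, hv Q' v <= hv Q v.

Lemma hv_le_h Q v : hv Q v <= h Q.
Proof.
have [/hasP [t tQ /eqP <-]|] := boolP (has (fun t : tup => t.2 == v) Q).
  exact: (@leq_bigmax_seq _ Q xpredT (fun t : tup => hv Q t.2) t tQ).
by rewrite has_count -leqNgt leqn0 /hv => /eqP ->.
Qed.

Lemma h_le Q' Q : hv_le Q' Q -> h Q' <= h Q.
Proof.
move=> le_hv; apply/bigmax_leqP_seq => t _ _.
exact: leq_trans (le_hv t.2) (hv_le_h Q t.2).
Qed.

Lemma hv_cat Q R v : hv (Q ++ R) v = hv Q v + hv R v.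
Proof. exact: count_cat. Qed.

Lemma hv_rem Q t v : t \in Q -> hv Q v = (t.2 == v) + hv (rem t Q) v.
Proof. by move=> tQ; rewrite /hv (permP (perm_to_rem tQ)). Qed.

Lemma size_le Q' Q : hv_le Q' Q -> size Q' <= size Q.
Proof.
elim: Q' Q => [//|t Q' IH] Q le_hv.
have /hasP [u uQ /eqP ut] : has (fun u : tup => u.2 == t.2) Q.
  by rewrite has_count; apply: leq_trans (le_hv t.2); rewrite /hv /= eqxx.
have le_rem : hv_le Q' (rem u Q).
  by move=> v; have := le_hv v; rewrite (hv_rem v uQ) /hv /= ut; lia.
by rewrite (perm_size (perm_to_rem uQ)) ltnS IH.
Qed.

Lemma pillar_hv_lt l Q' Q v :
  eligible l Q' -> ~~ eligible l Q -> hv_le Q' Q -> hv Q v = h Q ->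
  hv Q' v < hv Q v.
Proof.
rewrite /eligible -ltnNge => elQ' nelQ le_hv pillar.
rewrite ltn_neqAle le_hv andbT; apply/eqP => eq_hv.
have : l * h Q <= l * h Q' by rewrite leq_mul2l -pillar -eq_hv hv_le_h orbT.
by have := size_le le_hv; lia.
Qed.

Lemma phase1_hv_le l Q R : phase1 l Q R ->
  forall Q', eligible l Q' -> hv_le Q' Q -> forall v, hv R v + hv Q' v <= hv Q v.
Proof.
elim=> {Q R} [Q _ Q' _ le_hv v|Q t R nelQ tQ pillar _ IH Q' elQ' le_hv v].
  exact: le_hv.
have lt_t := pillar_hv_lt elQ' nelQ le_hv pillar.
have le_rem : hv_le Q' (rem t Q).
  move=> u; have := le_hv u; rewrite (hv_rem u tQ).
  have [<-|] := eqVneq t.2 u; last by [].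
  by move: lt_t; rewrite (hv_rem t.2 tQ) eqxx; lia.
by have := IH Q' elQ' le_rem v; rewrite (hv_rem v tQ) /hv /=; lia.
Qed.

Definition qi_restrict qs X : seq tup := [seq t <- X | t.1 \in qs].

Lemma hv_qi_restrict_cons q qs X v : q \notin qs ->
  hv (qi_restrict (q :: qs) X) v = hv (qi_class X q) v + hv (qi_restrict qs X) v.
Proof.
move=> qNqs; rewrite /hv !count_filter -count_predUI.
rewrite [X in _ = _ + X](_ : _ = 0); last first.
  apply/eqP; rewrite -leqn0 leqNgt -has_count.
  by apply/hasP => -[t _ /and3P [/andP [_ /eqP tq] _ tqs]]; rewrite -tq tqs in qNqs.
by rewrite addn0; apply: eq_count => t /=; rewrite inE; case: (t.2 == v); rewrite ?andbF.
Qed.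

Lemma qi_restrict_values T X : {subset X <= T} -> qi_restrict (qi_values T) X = X.
Proof.
move=> sXT; apply/all_filterP/allP => t /sXT tT.
by rewrite /qi_values mem_undup map_f.
Qed.

Lemma phase1_classes_hv_le l T S qs Rs : phase1_classes l T qs Rs -> uniq qs ->
  (forall q, eligible l (qi_class S q)) -> (forall P, count P S <= count P T) ->
  forall v, hv Rs v + hv (qi_restrict qs S) v <= hv (qi_restrict qs T) v.
Proof.
elim=> {qs Rs} [_ _ _ v|q qs R Rs phR _ IH /andP [qNqs uqs] elS leST v].
  by rewrite /qi_restrict !filter_pred0.
have le_class : hv_le (qi_class S q) (qi_class T q).
  by move=> u; rewrite /hv /qi_class !count_filter.
have := phase1_hv_le phR (elS q) le_class v.
have := IH uqs elS leST v.
by rewrite hv_cat !hv_qi_restrict_cons //; lia.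
Qed.

End PhaseOne.

Theorem corollary2 (qT sT : eqType) (l : nat) (T Rdot : seq (qT * sT)) :
  eligible l T -> phase_one l T Rdot ->
  forall S R' : seq (qT * sT), feasible l T S R' -> l * h Rdot <= size R'.
Proof.
move=> _ phT S R' [permT [elS elR']].
have leST P : count P S <= count P T by rewrite (permP permT) count_cat leq_addr.
have subST : {subset S <= T} by move=> t tS; rewrite (perm_mem permT) mem_cat tS.
have le_hv : hv_le Rdot R'.
  move=> v; have := phase1_classes_hv_le phT (undup_uniq _) elS leST v.
  rewrite !qi_restrict_values //.
  by rewrite /hv (permP permT) count_cat addnC leq_add2l.
by apply: leq_trans elR'; rewrite leq_mul2l h_le ?orbT.
Qed.
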